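(* Let $F$ be a cellular automaton on $A^{\mathbb N}$. Then $\mathfrak d_L(F(x),x)=0$ for all $x\in A^{\mathbb N}$ if and only if there exists $k\in\mathbb N$ such that $F=\sigma^k$.
   Context: $A$ is a finite alphabet; $\sigma(x)_i=x_{i+1}$; $x_{[i,j)}=x_i\cdots x_{j-1}$. A cellular automaton with diameter $\delta\ge1$ is $F(x)_i=f(x_{[i,i+\delta)})$ for a local rule $f:A^\delta\to A$. The Levenshtein distance is $d_L(u,v)=\frac{|u|+|v|}{2}-\ell$, $\ell$ the length of a longest common subsequence of $u,v$; the Feldman pseudo-metric is $\mathfrak d_L(x,y)=\limsup_{l\to\infty}d_L(x_{[0,l)},y_{[0,l)})/l$. *)

From HB Require Import structures.
From mathcomp Require Import all_boot all_order all_algebra.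
From mathcomp Require Import all_classical all_reals all_analysis.
From mathcomp Require Import Rstruct Rstruct_topology.
Set Implicit Arguments. Unset Strict Implicit. Unset Printing Implicit Defensive.
Import Order.TTheory GRing.Theory Num.Theory.
Local Open Scope ring_scope.

Section Defs.
Variable A : finType.

Definition config := nat -> A.

Definition sigma (x : config) : config := fun i => x i.+1.

Definition factor (x : config) (i j : nat) : seq A := mkseq (fun n => x (i + n)) (j - i).

Definition CA (delta : nat) (f : delta.-tuple A -> A) (x : config) : config :=
  fun i => f [tuple x (i + val j) | j < delta].

Definition lcs (u v : seq A) : nat :=
  \max_(m : (size u).-tuple bool | subseq (mask m u) v) size (mask m u).

Definition levenshtein (u v : seq A) : Rdefinitions.R :=
  ((size u + size v)%:R / 2 - (lcs u v)%:R)%R.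

Definition feldman (x y : config) : \bar Rdefinitions.R :=
  limn_esup (fun l : nat => ((levenshtein (factor x 0 l) (factor y 0 l)) / l%:R)%:E).

End Defs.

From Pilot Require Import Defs.
From mathcomp Require Import all_boot all_order all_algebra.
From mathcomp Require Import all_classical all_reals all_analysis.
From mathcomp Require Import Rstruct Rstruct_topology.
From mathcomp Require Import zify lra.
Set Implicit Arguments. Unset Strict Implicit. Unset Printing Implicit Defensive.
Import Order.TTheory GRing.Theory Num.Theory.

(* If d_L(F x, x) = 0, then for every P the prefixes of F x and x share a factor
   of length P: otherwise every block of P letters of x_[0,l) loses a letter in a
   longest common subsequence, and d_L >= 1/(4P) on all long prefixes.  When x is
   P-periodic so is F x, and a single shared window of length P then forces
   F x = sigma^r x for some r < P.  Apply this to a periodic "probe": a marker b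
   at position delta and an arbitrary word w at positions [3 delta, 4 delta), in
   a background of a's, with period 10 delta.  Reading off where F sends the
   marker shows r < delta, that r does not depend on w, and that f w = w_r; so
   F = sigma^r.  Conversely sigma^k x and x have Levenshtein distance at most k
   on every prefix. *)

(* A bare [factor] would resolve to an unrelated MathComp-Analysis constant. *)
Local Notation factor := Defs.factor.

Section CommonSubsequences.
Variable T : eqType.
Implicit Types s t u v w : seq T.

Lemma subseq_cat_l_inv s1 s2 t : subseq (s1 ++ s2) t ->
  exists t1 t2, [/\ t = t1 ++ t2, subseq s1 t1 & subseq s2 t2].
Proof.
elim: t s1 => [|y t IH] [|x s1] /=.
- by move=> /eqP ->; exists [::], [::].
- by [].
- by move=> sub_s2; exists [::], (y :: t).
case: eqP => [-> | neq_xy] sub.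
  have [t1 [t2 [-> sub1 sub2]]] := IH _ sub.
  by exists (y :: t1), t2; rewrite /= eqxx.
have [t1 [t2 [-> sub1 sub2]]] := IH (x :: s1) sub.
by exists (y :: t1), t2; split => //=; case: eqP.
Qed.

Lemma subseq_cat_r_inv w t1 t2 : subseq w (t1 ++ t2) ->
  exists w1 w2, [/\ w = w1 ++ w2, subseq w1 t1 & subseq w2 t2].
Proof.
case/subseqP => m size_m ->.
exists (mask (take (size t1) m) t1), (mask (drop (size t1) m) t2).
split; try exact: mask_subseq.
by rewrite -mask_cat ?cat_take_drop // size_takel // size_m size_cat leq_addr.
Qed.

Lemma common_subseq_size_lt u v w : subseq w u -> subseq w v -> u != v ->
  2 * size w < size u + size v.
Proof.
move=> sub_wu sub_wv; apply: contra_neqT; rewrite -leqNgt => le_uv.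
have [le_wu le_wv] := (size_subseq sub_wu, size_subseq sub_wv).
have /eqP <- : w == u by rewrite -(size_subseq_leqif sub_wu); lia.
by apply/eqP; rewrite -(size_subseq_leqif sub_wv); lia.
Qed.

Lemma common_subseq_size_no_common_factor p c u v w :
  (forall z, size z = p -> infix z u -> infix z v -> False) ->
  subseq w u -> subseq w v -> c * p <= size v ->
  2 * size w + c <= size u + size v.
Proof.
elim: c u v w => [|c IH] u v w no_factor sub_wu sub_wv size_v.
  by rewrite addn0 mul2n -addnn leq_add ?size_subseq.
have size_vp : size (take p v) = p.
  by rewrite size_takel // (leq_trans _ size_v) // mulSn leq_addr.
move: sub_wv; rewrite -(cat_take_drop p v) => /subseq_cat_r_inv.
move=> [w1 [w2 [eq_w sub_w1 sub_w2]]]; subst w.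
have [u1 [u2 [eq_u sub_u1 sub_u2]]] := subseq_cat_l_inv sub_wu; subst u.
have first_block : 2 * size w1 < size u1 + p.
  rewrite -[X in _ < _ + X]size_vp; apply: common_subseq_size_lt => //.
  apply/eqP => eq_u1; apply: (no_factor (take p v) size_vp).
    by rewrite -eq_u1 prefix_infix.
  by rewrite -{2}(cat_take_drop p v) prefix_infix.
have other_blocks : 2 * size w2 + c <= size u2 + size (drop p v).
  apply: IH => // [z size_z z_u2 z_v2|].
    apply: (no_factor z size_z); first exact: infix_catl.
    by rewrite -(cat_take_drop p v); apply: infix_catl.
  by move: size_v; rewrite size_drop mulSn; lia.
move: first_block other_blocks; rewrite !size_cat size_vp; lia.
Qed.

End CommonSubsequences.

Section LongestCommonSubsequence.
Variable A : finType.
Implicit Types u v w : seq A.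

Lemma leq_size_lcs u v w : subseq w u -> subseq w v -> size w <= lcs u v.
Proof.
case/subseqP => m size_m -> sub_v.
have size_m' : size m == size u by apply/eqP.
exact: (@leq_bigmax_cond _ _ (fun m : (size u).-tuple bool => size (mask m u))
  (Tuple size_m')).
Qed.

Lemma lcs_witness u v :
  exists w, [/\ subseq w u, subseq w v & size w = lcs u v].
Proof.
have : 0 < #|[pred m : (size u).-tuple bool | subseq (mask m u) v]|.
  apply/card_gt0P; exists (nseq_tuple (size u) false).
  by rewrite inE /= mask_false sub0seq.
case/(eq_bigmax_cond (fun m : (size u).-tuple bool => size (mask m u))).
move=> m; rewrite inE => sub_v eq_lcs.
by exists (mask m u); rewrite mask_subseq sub_v /lcs eq_lcs.
Qed.

Lemma lcs_le_size u v : lcs u v <= size u.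
Proof. by have [w [sub_u _ <-]] := lcs_witness u v; apply: size_subseq. Qed.

End LongestCommonSubsequence.

Section Prefixes.
Variable A : finType.
Implicit Types x y : config A.

Lemma factor0 x l : factor x 0 l = mkseq x l.
Proof. by rewrite /factor subn0. Qed.

Lemma mkseqD (g : nat -> A) m n :
  mkseq g (m + n) = mkseq g m ++ mkseq (fun i => g (m + i)) n.
Proof. by rewrite /mkseq iotaD map_cat -[in iota m n](addn0 m) iotaDl -map_comp. Qed.

Lemma iter_sigma k x n : iter k (@sigma A) x n = x (n + k).
Proof. by elim: k n => [|k IH] n; rewrite ?addn0 // iterS /sigma IH addSnnS. Qed.

Lemma lcs_iter_sigma k x l :
  l - k <= lcs (factor (iter k (@sigma A) x) 0 l) (factor x 0 l).
Proof.
rewrite !factor0; have [le_kl|lt_lk] := leqP k l; last first.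
  by move/ltnW: lt_lk; rewrite -subn_eq0 => /eqP ->.
pose w := mkseq (fun n => x (k + n)) (l - k).
have <- : size w = l - k by rewrite size_mkseq.
apply: leq_size_lcs.
  rewrite -(subnK le_kl) mkseqD.
  rewrite (_ : mkseq _ (l - k) = w); first exact: prefix_subseq.
  by apply: eq_mkseq => n; rewrite iter_sigma addnC.
by rewrite -(subnKC le_kl) mkseqD; apply: suffix_subseq.
Qed.

Local Open Scope ring_scope.

Lemma levenshtein_prefix y x l :
  levenshtein (factor y 0 l) (factor x 0 l) =
  l%:R - (lcs (factor y 0 l) (factor x 0 l))%:R.
Proof. by rewrite /levenshtein !factor0 !size_mkseq natrD; lra. Qed.

Lemma levenshtein_prefix_ge0 y x l :
  0 <= levenshtein (factor y 0 l) (factor x 0 l).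
Proof.
rewrite levenshtein_prefix subr_ge0 ler_nat.
by rewrite -[leqRHS](size_mkseq y) -factor0 lcs_le_size.
Qed.

End Prefixes.

Section FeldmanShift.
Variable A : finType.
Local Open Scope ring_scope.

Lemma levenshtein_prefix_iter_sigma k (x : config A) l :
  levenshtein (factor (iter k (@sigma A) x) 0 l) (factor x 0 l) <= k%:R.
Proof.
rewrite levenshtein_prefix lerBlDr -natrD ler_nat.
by have := lcs_iter_sigma k x l; lia.
Qed.

Lemma feldman_iter_sigma k (x : config A) : feldman (iter k (@sigma A) x) x = 0%E.
Proof.
apply: (cvg_limn_einf_sup _).2; apply: cvg_EFin; first exact: nearW.
apply: (@squeeze_cvgr _ _ _ _ (fun=> 0) (fun l => harmonic l *+ (2 * k))).
- apply: nearW => l /=; set L := levenshtein _ _.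
  have L_ge0 : 0 <= L by apply: levenshtein_prefix_ge0.
  have L_le : L <= k%:R by apply: levenshtein_prefix_iter_sigma.
  rewrite divr_ge0 //=.
  have [->|l_gt0] := posnP l; first by rewrite invr0 mulr0 mulrn_wge0.
  rewrite -[harmonic l *+ _]mulr_natl /harmonic /= ler_pdivrMr ?ltr0n //.
  rewrite mulrAC ler_pdivlMr ?ltr0n //.
  have l_ge1 : 1 <= l%:R :> Rdefinitions.R by rewrite ler1n.
  by rewrite -natr1 natrM; nra.
- exact: cvg_cst.
- by rewrite -(mul0rn _ (2 * k)); apply: cvgMn; apply: cvg_harmonic.
Qed.

End FeldmanShift.

Section LimsupLowerBound.
Local Open Scope classical_set_scope.

Lemma limn_esup_ge (R : realType) (u : (\bar R)^nat) c :
  (\forall n \near \oo, c <= u n)%E -> (c <= limn_esup u)%E.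
Proof.
move=> u_ge; rewrite limn_esup_lim; apply: lime_ge; first exact: is_cvg_esups.
apply: filterS u_ge => n c_le; apply: (le_trans c_le).
by apply: ereal_sup_ubound; exists n => /=.
Qed.

End LimsupLowerBound.

Section FeldmanZero.
Variable A : finType.
Implicit Types x y : config A.

Definition common_window y x P :=
  exists i j, forall t, t < P -> y (i + t) = x (j + t).

Lemma infix_prefix_window x l z a : infix z (factor x 0 l) ->
  exists i, forall t, t < size z -> x (i + t) = nth a z t.
Proof.
case/infixP => s1 [s2 eq_x]; exists (size s1) => t lt_tz.
have size_x := congr1 size eq_x; rewrite factor0 size_mkseq !size_cat in size_x.
rewrite -(nth_mkseq a x (_ : size s1 + t < l)); last by rewrite size_x; lia.
by rewrite -factor0 eq_x nth_cat ltnNge leq_addr addKn nth_cat lt_tz.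
Qed.

Lemma common_factor_window y x P l z : size z = P ->
  infix z (factor y 0 l) -> infix z (factor x 0 l) -> common_window y x P.
Proof.
move=> <- /(infix_prefix_window (y 0)) [i eq_y].
move=> /(infix_prefix_window (y 0)) [j eq_x].
by exists i, j => t lt_tz; rewrite eq_y ?eq_x.
Qed.

Lemma lcs_prefix_no_common_window y x P l : ~ common_window y x P -> 0 < P ->
  2 * lcs (factor y 0 l) (factor x 0 l) + l %/ P <= 2 * l.
Proof.
move=> no_window P_gt0.
have [w [sub_y sub_x <-]] := lcs_witness (factor y 0 l) (factor x 0 l).
have := common_subseq_size_no_common_factor (p := P) (c := l %/ P) _ sub_y sub_x.
rewrite !factor0 !size_mkseq addnn -mul2n; apply=> [z size_z z_y z_x|].
  by apply/no_window/(common_factor_window (l := l) size_z); rewrite factor0.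
exact: leq_divM.
Qed.

Local Open Scope ring_scope.

Lemma levenshtein_prefix_no_common_window y x P l :
  ~ common_window y x P -> (0 < P)%N -> (P <= l)%N ->
  (4 * P)%:R^-1 <= levenshtein (factor y 0 l) (factor x 0 l) / l%:R.
Proof.
move=> no_window P_gt0 le_Pl.
have lcs_le := lcs_prefix_no_common_window l no_window P_gt0.
have q_gt0 : (0 < l %/ P)%N by rewrite divn_gt0.
have l_le : (l <= 2 * (P * (l %/ P)))%N.
  have := divn_eq l P; have := ltn_pmod l P_gt0.
  have : (P <= P * (l %/ P))%N by rewrite leq_pmulr.
  lia.
have : (l <= 4 * P * (l - lcs (factor y 0 l) (factor x 0 l)))%N by nia.
rewrite levenshtein_prefix -natrB; last by lia.
rewrite ler_pdivlMr ?ltr0n; last by lia.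
by rewrite mulrC ler_pdivrMr ?ltr0n ?muln_gt0 // -natrM ler_nat mulnC.
Qed.

Lemma feldman_eq0_common_window y x P :
  (0 < P)%N -> feldman y x = 0%E -> common_window y x P.
Proof.
move=> P_gt0 feldman0; apply: contrapT => no_window.
have : ((4 * P)%:R^-1%:E <= feldman y x)%E.
  apply: limn_esup_ge; near=> l; rewrite lee_fin.
  by apply: levenshtein_prefix_no_common_window => //; near: l; exists P.
by rewrite feldman0 lee_fin leNgt invr_gt0 ltr0n muln_gt0 P_gt0.
Unshelve. all: by end_near.
Qed.

End FeldmanZero.

Section PeriodicConfigurations.
Variable A : finType.
Implicit Types x y : config A.

Definition periodic x P := forall n, x (n + P) = x n.

Lemma periodic_mod x P : periodic x P -> forall n, x n = x (n %% P).
Proof.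
move=> per_x n; rewrite {1}(divn_eq n P); elim: (n %/ P) => [|q IH] //.
by rewrite mulSn -addnA addnC per_x.
Qed.

Lemma periodic_eq_mod x P n m : periodic x P -> n = m %[mod P] -> x n = x m.
Proof. by move=> per_x eq_nm; rewrite (periodic_mod per_x n) eq_nm -periodic_mod. Qed.

Lemma periodic_common_window_shift y x P : 0 < P ->
  periodic y P -> periodic x P -> common_window y x P ->
  exists2 r, r < P & forall n, y n = x (n + r).
Proof.
move=> P_gt0 per_y per_x [i [j window]].
set s := P - i %% P.
have is_P : (i + s) %% P = 0 by rewrite -modnDml subnKC ?modnn // ltnW ?ltn_pmod.
exists ((j + s) %% P) => [|n]; first by rewrite ltn_pmod.
rewrite (periodic_eq_mod (m := i + (s + n) %% P) per_y); last first.
  by rewrite modnDmr addnA -modnDml is_P.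
rewrite window ?ltn_pmod //; apply: periodic_eq_mod per_x _.
by rewrite !modnDmr; congr (_ %% P); lia.
Qed.

End PeriodicConfigurations.

Section CellularAutomata.
Variables (A : finType) (delta : nat) (f : delta.-tuple A -> A).
Implicit Types x : config A.

Lemma CA_local x n (w : delta.-tuple A) :
  (forall i : 'I_delta, x (n + i) = tnth w i) -> CA f x n = f w.
Proof.
move=> eq_xw; rewrite /CA; congr f.
by apply: eq_from_tnth => i; rewrite tnth_mktuple; apply: eq_xw.
Qed.

Lemma CA_periodic x P : periodic x P -> periodic (CA f x) P.
Proof.
move=> per_x n; rewrite (CA_local (w := [tuple x (n + val i) | i < delta])) //.
by move=> i; rewrite tnth_mktuple addnAC per_x.
Qed.

Lemma CA_projection (k : 'I_delta) : (forall w, f w = tnth w k) ->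
  CA f = iter k (@sigma A).
Proof.
move=> f_proj; apply/funext => x; apply/funext => n.
by rewrite iter_sigma /CA f_proj tnth_mktuple.
Qed.

Hypothesis feldman_CA0 : forall x, feldman (CA f x) x = 0%E.

Lemma CA_periodic_shift x P : 0 < P -> periodic x P ->
  exists2 r, r < P & forall n, CA f x n = x (n + r).
Proof.
move=> P_gt0 per_x; apply: periodic_common_window_shift => //.
- exact: CA_periodic.
- exact: feldman_eq0_common_window.
Qed.

Lemma CA_rule_const a : f [tuple a | _ < delta] = a.
Proof.
have [i [j window]] := feldman_eq0_common_window (ltn0Sn 0) (feldman_CA0 (fun=> a)).
have <- : CA f (fun=> a) i = f [tuple a | _ < delta].
  by apply: CA_local => k; rewrite tnth_mktuple.
by rewrite -[i]addn0 window.
Qed.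

Lemma CA_local_const x n a : (forall i, i < delta -> x (n + i) = a) -> CA f x n = a.
Proof.
move=> eq_xa; rewrite -[RHS]CA_rule_const.
by apply: CA_local => i; rewrite tnth_mktuple eq_xa.
Qed.

End CellularAutomata.

Section Probe.
Variables (A : finType) (delta : nat) (f : delta.-tuple A -> A).
Hypothesis feldman_CA0 : forall x, feldman (CA f x) x = 0%E.
Variables (a b : A).
Hypothesis neq_ab : a != b.
Implicit Types w : delta.-tuple A.

Definition pulse j : delta.-tuple A := [tuple if i == j :> nat then b else a | i < delta].

Definition probe_cell w t :=
  if t == delta then b
  else if 3 * delta <= t < 4 * delta then nth a w (t - 3 * delta) else a.

Definition probe w : config A := fun n => probe_cell w (n %% (10 * delta)).

Lemma probe_periodic w : periodic (probe w) (10 * delta).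
Proof. by move=> n; rewrite /probe modnDr. Qed.

Lemma probe_small w n : n < 10 * delta -> probe w n = probe_cell w n.
Proof. by move=> lt_n; rewrite /probe modn_small. Qed.

Lemma probe_quiet w m :
  (m < 10 * delta /\ m <> delta /\ (m < 3 * delta \/ 4 * delta <= m)) \/
  (10 * delta <= m /\ m < 11 * delta) -> probe w m = a.
Proof.
case=> [[lt_m [neq_m out_m]] | [ge_m lt_m]].
  rewrite probe_small // /probe_cell ifN; last by apply/eqP.
  by rewrite ifN //; apply/negP => /andP; lia.
rewrite -(subnK ge_m) probe_periodic probe_small /probe_cell; last by lia.
rewrite ifN; last by apply/eqP; lia.
by rewrite ifN //; apply/negP => /andP; lia.
Qed.

Lemma probe_center w : 0 < delta -> probe w delta = b.
Proof. by move=> delta_gt0; rewrite probe_small /probe_cell ?eqxx //; lia. Qed.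

Lemma probe_block w e : e < delta -> probe w (3 * delta + e) = nth a w e.
Proof.
move=> lt_e; rewrite probe_small /probe_cell; last by lia.
rewrite ifN; last by apply/eqP; lia.
by rewrite ifT ?addKn //; apply/andP; lia.
Qed.

Lemma CA_probe_pulse w j : j < delta -> CA f (probe w) (delta - j) = f (pulse j).
Proof.
move=> lt_j; apply: CA_local => i; rewrite tnth_mktuple.
case: eqP => [-> | neq_ij]; first by rewrite subnK ?(ltnW lt_j) // probe_center //; lia.
by apply: probe_quiet; move: (ltn_ord i); lia.
Qed.

Lemma CA_probe_block w : CA f (probe w) (3 * delta) = f w.
Proof. by apply: CA_local => i; rewrite probe_block // (tnth_nth a). Qed.

Lemma probe_shift w : has (fun c => c != a) w ->
  exists2 r, r < delta & forall n, CA f (probe w) n = probe w (n + r).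
Proof.
case/hasP => _ /(nthP a) [e lt_e <-] neq_a; rewrite size_tuple in lt_e.
have P_gt0 : 0 < 10 * delta by lia.
have [r lt_r shift] := CA_periodic_shift feldman_CA0 P_gt0 (probe_periodic w).
exists r => //; rewrite ltnNge; apply/negP => le_r.
(* For r >= delta the marker b is read by a window starting in (2 delta, 4 delta);
   shifting by 2 delta + e, the letter w_e != a is then read by an all-a window. *)
have b_seen : CA f (probe w) (delta + 10 * delta - r) = b.
  by rewrite shift subnK ?probe_periodic ?probe_center //; lia.
have window_b : 2 * delta < delta + 10 * delta - r /\ delta + 10 * delta - r < 4 * delta.
  suff : ~ (delta + 10 * delta - r <= 2 * delta \/ 4 * delta <= delta + 10 * delta - r).
    by lia.
  move=> far; move: neq_ab.
  rewrite -b_seen (CA_local_const feldman_CA0 (a := a)) ?eqxx // => i lt_i.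
  by apply: probe_quiet; lia.
have : CA f (probe w) (3 * delta + e + 10 * delta - r) = a.
  by apply: (CA_local_const feldman_CA0) => i lt_i; apply: probe_quiet; lia.
rewrite shift subnK ?probe_periodic ?probe_block //; last by lia.
by move=> eq_a; rewrite eq_a eqxx in neq_a.
Qed.

Lemma probe_rule w : has (fun c => c != a) w ->
  exists2 r, r < delta &
    (forall j, j < delta -> f (pulse j) = if j == r then b else a) /\ f w = nth a w r.
Proof.
move=> has_w; have [r lt_r shift] := probe_shift has_w.
exists r => //; split; last by rewrite -CA_probe_block shift probe_block.
move=> j lt_j; rewrite -(CA_probe_pulse w) // shift.
case: eqP => [-> | neq_jr]; first by rewrite subnK ?(ltnW lt_r) // probe_center //; lia.
by apply: probe_quiet; lia.
Qed.

End Probe.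

Lemma CA_rule_projection (A : finType) (delta : nat) (f : delta.-tuple A -> A) :
  0 < delta -> (forall x, feldman (CA f x) x = 0%E) ->
  exists k : 'I_delta, forall w, f w = tnth w k.
Proof.
move=> delta_gt0 feldman_CA0.
have [[a [b neq_ab]] | trivial_A] := pselect (exists a b : A, a != b); last first.
  exists (Ordinal delta_gt0) => w; apply: contrapT => neq_w; apply: trivial_A.
  by exists (f w), (tnth w (Ordinal delta_gt0)); apply/eqP.
have has_b : has (fun c => c != a) (nseq_tuple delta b).
  by rewrite has_nseq delta_gt0 eq_sym.
have [k lt_k [pulse_k _]] := probe_rule feldman_CA0 neq_ab has_b.
exists (Ordinal lt_k) => w.
have [has_w | /hasPn all_a] := boolP (has (fun c => c != a) w).
  have [r _ [pulse_r ->]] := probe_rule feldman_CA0 neq_ab has_w.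
  suff -> : r = k by rewrite (tnth_nth a).
  apply/eqP; have := pulse_r k lt_k; rewrite pulse_k // eqxx eq_sym.
  by case: eqP => // _ eq_ba; rewrite eq_ba eqxx in neq_ab.
have -> : w = [tuple a | _ < delta].
  apply: eq_from_tnth => i; rewrite tnth_mktuple.
  by apply/eqP; rewrite -[_ == _]negbK all_a ?mem_tnth.
by rewrite tnth_mktuple CA_rule_const.
Qed.

Unset Implicit Arguments.

Theorem mainTheorem10 (A : finType) (delta : nat) (f : delta.-tuple A -> A) :
  (0 < delta)%N ->
  ((forall x : config A, feldman (CA f x) x = 0%E) <->
   (exists k : nat, CA f = iter k (@sigma A))).
Proof.
move=> delta_gt0; split=> [feldman_CA0 | [k ->] x]; last exact: feldman_iter_sigma.
have [k f_proj] := CA_rule_projection delta_gt0 feldman_CA0.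
by exists k; apply: CA_projection.
Qed.
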